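(* Let $(\Lambda,d)$ be a rank-2 Bratteli diagram of depth $N$, with $\Lambda^0=\bigsqcup_n\bigsqcup_{j=1}^{c_n}V_{n,j}$ as described in the context. For $0\le n<N$, $1\le j\le c_n$ and $1\le i\le c_{n+1}$: (1) the sets $v\Lambda^{e_1}V_{n+1,i}$, $v\in V_{n,j}$, all have the same cardinality, denoted $A_n(i,j)$; (2) the sets $V_{n,j}\Lambda^{e_1}w$, $w\in V_{n+1,i}$, all have the same cardinality, denoted $B_n(i,j)$; (3) $A_n(i,j)\,|V_{n,j}|=|V_{n,j}\Lambda^{e_1}V_{n+1,i}|=|V_{n+1,i}|\,B_n(i,j)$. The resulting matrices $A_n,B_n\in M_{c_{n+1},c_n}(\mathbb Z_+)$ have no zero rows or columns. Letting $T_n\in M_{c_n}(\mathbb Z_+)$ be the diagonal matrix with $T_n(j,j)=|V_{n,j}|$, we have $A_nT_n=T_{n+1}B_n$ for $0\le n<N$.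
   Context: A $2$-graph is a countable category $\Lambda$ with a functor $d:\Lambda\to\mathbb N^2$ satisfying unique factorisation (if $d(\lambda)=m+n$ there are unique $\mu,\nu$ with $d(\mu)=m,d(\nu)=n,\lambda=\mu\nu$). Vertices $\Lambda^0$ = degree-$0$ paths; $r,s$ range/source; $\Lambda^n=d^{-1}(n)$; $e_1=(1,0),e_2=(0,1)$; $VEW=\{\lambda\in E:r(\lambda)\in V,s(\lambda)\in W\}$ (write $v$ for $\{v\}$). Row-finite: each $v\Lambda^n$ finite. Blue edges: $\Lambda^{e_1}$; red edges: $\Lambda^{e_2}$; red paths: degree in $\mathbb Ne_2$. $\lambda(m,n)$ is the unique path with $\lambda=\lambda'\lambda(m,n)\lambda''$, $d(\lambda')=m$, $d(\lambda(m,n))=n-m$, $\lambda(n)=\lambda(n,n)$. A cycle: $d(\lambda)\ne0$, $r(\lambda)=s(\lambda)$, $\lambda(n)\ne s(\lambda)$ for $0<n<d(\lambda)$; isolated: no $n\le d(\lambda)$ with $r(\lambda)\Lambda^n\setminus\{\lambda(0,n)\}\ne\emptyset$ and no $n\le d(\lambda)$ with $\Lambda^ns(\lambda)\setminus\{\lambda(d(\lambda)-n,d(\lambda))\}\ne\emptyset$. A rank-2 Bratteli diagram of depth $N\in\mathbb N\cup\{\infty\}$ is a row-finite 2-graph with $\Lambda^0=\bigsqcup_{0\le n\le N}V_n$ ($n$ ranging over all of $\mathbb N$ if $N=\infty$), each $V_n$ nonempty and finite, such that: (1) every blue edge $e$ has $r(e)\in V_n$, $s(e)\in V_{n+1}$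 for some $n$; (2) every vertex $v$ with $\Lambda^{e_1}v=\emptyset$ lies in $V_0$ and every vertex $v$ with $v\Lambda^{e_1}=\emptyset$ lies in $V_N$ (if $N=\infty$ there is no vertex with $v\Lambda^{e_1}=\emptyset$); (3) every vertex lies on an isolated cycle consisting of red edges, and every red edge has range and source in the same $V_n$. Consequently each $V_n=\bigsqcup_{j=1}^{c_n}V_{n,j}$ where the $V_{n,j}$ are the vertex sets of the distinct isolated red cycles meeting $V_n$. *)

From HB Require Import structures.
From mathcomp Require Import all_boot all_order all_algebra.
Set Implicit Arguments. Unset Strict Implicit. Unset Printing Implicit Defensive.

Definition addN2 (m n : nat * nat) : nat * nat := (m.1 + n.1, m.2 + n.2)%N.
Definition subN2 (m n : nat * nat) : nat * nat := (m.1 - n.1, m.2 - n.2)%N.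
Definition leN2 (m n : nat * nat) : Prop := (m.1 <= n.1)%N /\ (m.2 <= n.2)%N.
Definition e1 : nat * nat := (1, 0)%N.
Definition e2 : nat * nat := (0, 1)%N.
Definition zero2 : nat * nat := (0, 0)%N.

(* A 2-graph: a countable category (objects = vertices, identified with the
   degree-0 paths via [id]) with a degree functor to N^2 satisfying unique
   factorisation.  Composition is total, but only meaningful for composable
   pairs (sr mu = rg nu); all axioms refer only to composable pairs. *)
Record twograph := TwoGraph {
  obj : countType;
  mor : countType;
  id : obj -> mor;
  rg : mor -> obj;
  sr : mor -> obj;
  comp : mor -> mor -> mor;
  deg : mor -> nat * nat;
  rg_id : forall v, rg (id v) = v;
  sr_id : forall v, sr (id v) = v;
  rg_comp : forall mu nu, sr mu = rg nu -> rg (comp mu nu) = rg mu;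
  sr_comp : forall mu nu, sr mu = rg nu -> sr (comp mu nu) = sr nu;
  comp_id_l : forall mu, comp (id (rg mu)) mu = mu;
  comp_id_r : forall mu, comp mu (id (sr mu)) = mu;
  comp_assoc : forall a b c, sr a = rg b -> sr b = rg c ->
      comp a (comp b c) = comp (comp a b) c;
  deg_id : forall v, deg (id v) = zero2;
  deg_comp : forall mu nu, sr mu = rg nu -> deg (comp mu nu) = addN2 (deg mu) (deg nu);
  unique_fact : forall lam m n, deg lam = addN2 m n ->
      exists! p : mor * mor,
        [/\ deg p.1 = m, deg p.2 = n, sr p.1 = rg p.2 & comp p.1 p.2 = lam]
}.

Section TwoGraphDefs.
Variable G : twograph.

Definition has_card (T : eqType) (P : T -> Prop) (k : nat) : Prop :=
  exists s : seq T, [/\ uniq s, size s = k & forall x, P x <-> x \in s].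
Definition finite_set (T : eqType) (P : T -> Prop) : Prop :=
  exists k, has_card P k.

Definition row_finite : Prop :=
  forall (v : obj G) n, finite_set (fun lam : mor G => rg lam = v /\ deg lam = n).

Definition seg (lam : mor G) (m n : nat * nat) (mu : mor G) : Prop :=
  exists a b : mor G, [/\ deg a = m, deg mu = subN2 n m, sr a = rg mu,
                          sr mu = rg b & lam = comp a (comp mu b)].

Definition vtx (lam : mor G) (n : nat * nat) (v : obj G) : Prop :=
  seg lam n n (id v).

Definition is_cycle (lam : mor G) : Prop :=
  [/\ deg lam <> zero2, rg lam = sr lam &
      forall n, leN2 n (deg lam) -> n <> zero2 -> n <> deg lam ->
        forall v, vtx lam n v -> v <> sr lam].

Definition isolated (lam : mor G) : Prop :=
  forall n, leN2 n (deg lam) ->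
    (forall mu, rg mu = rg lam -> deg mu = n -> seg lam zero2 n mu) /\
    (forall mu, sr mu = sr lam -> deg mu = n ->
        seg lam (subN2 (deg lam) n) (deg lam) mu).

Definition red_path (lam : mor G) : Prop := (deg lam).1 = 0%N.

Definition iso_red_cycle (lam : mor G) : Prop :=
  [/\ is_cycle lam, isolated lam & red_path lam].

Definition on_path (lam : mor G) (v : obj G) : Prop :=
  exists k, leN2 k (deg lam) /\ vtx lam k v.

Definition blue (e : mor G) : Prop := deg e = e1.
Definition red (e : mor G) : Prop := deg e = e2.

(* depth N in N \cup {oo}: None = oo *)
Definition in_depth (N : option nat) (n : nat) : Prop :=
  match N with Some N0 => (n <= N0)%N | None => True end.
Definition lt_depth (N : option nat) (n : nat) : Prop :=
  match N with Some N0 => (n < N0)%N | None => True end.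

(* Rank-2 Bratteli diagram of depth N; V_n = level^-1(n). *)
Definition bratteli (N : option nat) (level : obj G -> nat) : Prop :=
  row_finite /\
      (forall v, in_depth N (level v)) /\
      (forall n, in_depth N n ->
          (exists v, level v = n) /\ finite_set (fun v => level v = n)) /\
      (forall e, blue e -> level (sr e) = (level (rg e)).+1) /\
      (forall v, (forall e, blue e -> sr e <> v) -> level v = 0%N) /\
      (forall v, (forall e, blue e -> rg e <> v) -> N = Some (level v)) /\
      (forall v, exists lam, iso_red_cycle lam /\ on_path lam v) /\
      (forall e, red e -> level (rg e) = level (sr e)).

Definition cycle_enum (level : obj G -> nat) (n c : nat)
    (Vs : 'I_c -> obj G -> Prop) : Prop :=
  [/\ (forall j, exists lam, [/\ iso_red_cycle lam,
                               (forall v, Vs j v <-> on_path lam v) &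
                               exists v, on_path lam v /\ level v = n]),
      (forall lam, iso_red_cycle lam -> (exists v, on_path lam v /\ level v = n) ->
          exists j, forall v, Vs j v <-> on_path lam v) &
      (forall j j', (forall v, Vs j v <-> Vs j' v) -> j = j')].

End TwoGraphDefs.

(* Every vertex lies on an isolated red cycle, so it has exactly one red edge
   in and one red edge out, and each class V_{n,j} is a finite set closed under
   red edges.  For a red edge f and a blue edge e with r(e) = s(f), unique
   factorisation rewrites the path f e as e' g with e' blue and g red; since red
   edges are unique, e |-> e' is a bijection from s(f)Λ^{e1}W onto r(f)Λ^{e1}W
   for every W closed under red edges.  Hence |vΛ^{e1}V_{n+1,i}| is constant as
   v runs around the red cycle V_{n,j}, and dually (in the opposite 2-graph)
   |V_{n,j}Λ^{e1}w| is constant on V_{n+1,i}.  Counting V_{n,j}Λ^{e1}V_{n+1,i}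
   by ranges and by sources gives A_n(i,j)|V_{n,j}| = |V_{n+1,i}|B_n(i,j).
   Rows and columns are nonzero because every vertex outside V_0 is the source
   of a blue edge and every vertex outside V_N is the range of one. *)

From Pilot Require Import Defs.
From HB Require Import structures.
From mathcomp Require Import all_boot all_order all_algebra.
From mathcomp Require Import zify.
From Stdlib Require Import Classical ClassicalEpsilon IndefiniteDescription.

Set Implicit Arguments. Unset Strict Implicit. Unset Printing Implicit Defensive.

Section Cardinality.
Variable T : eqType.
Implicit Types (P Q : T -> Prop) (s : seq T).

Lemma eq_has_card P Q k : (forall x, P x <-> Q x) -> has_card P k -> has_card Q k.
Proof. by move=> PQ [s [Us Ss Ps]]; exists s; split=> // x; rewrite -PQ. Qed.

Lemma has_card_unique P k k' : has_card P k -> has_card P k' -> k = k'.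
Proof.
move=> [s [Us <- Ps]] [s' [Us' <- Ps']]; apply/perm_size/uniq_perm => // x.
by apply/idP/idP => [/Ps/Ps'|/Ps'/Ps].
Qed.

Lemma has_card_neq0 P k x : has_card P k -> P x -> k <> 0.
Proof. by move=> [s [_ <- Ps]] /Ps; case: s {Ps}. Qed.

Lemma finite_set_sub P s : (forall x, P x -> x \in s) -> finite_set P.
Proof.
pose p x := if excluded_middle_informative (P x) then true else false.
have pP x : reflect (P x) (p x) by rewrite /p; case: excluded_middle_informative; constructor.
move=> Ps; exists (size (undup (filter p s))), (undup (filter p s)).
split=> // [|x]; first exact: undup_uniq.
rewrite mem_undup mem_filter; split=> [Px|/andP[/pP]//].
by rewrite Ps // andbT; apply/pP.
Qed.

Lemma finite_set_subset P Q : (forall x, P x -> Q x) -> finite_set Q -> finite_set P.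
Proof. by move=> PQ [k [s [_ _ Qs]]]; apply: (@finite_set_sub _ s) => x /PQ /Qs. Qed.

Lemma finite_set_indexed P (Q : nat -> T -> Prop) m :
    (forall x, P x -> exists2 k, k < m & Q k x) ->
    (forall k x y, Q k x -> Q k y -> x = y) -> finite_set P.
Proof.
move=> PQ Qfun.
have [g Hg] : exists g : nat -> option T, forall k x, Q k x -> g k = Some x.
  apply: (functional_choice (fun k o => forall x, Q k x -> o = Some x)) => k.
  case: (classic (exists x, Q k x)) => [[x Qx]|nQ].
    by exists (Some x) => y Qy; rewrite (Qfun _ _ _ Qx Qy).
  by exists None => y Qy; case: nQ; exists y.
apply: (@finite_set_sub _ (pmap g (iota 0 m))) => x /PQ [k km Qkx].
by rewrite mem_pmap -(Hg k x Qkx); apply: map_f; rewrite mem_iota.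
Qed.

Lemma has_card_map (U : eqType) P (Q : U -> Prop) (f : T -> U) k :
    (forall x, P x -> Q (f x)) -> (forall y, Q y -> exists2 x, P x & f x = y) ->
    (forall x x', P x -> P x' -> f x = f x' -> x = x') ->
  has_card P k -> has_card Q k.
Proof.
move=> PQ onto inj [s [Us <- Ps]]; exists (map f s); split; rewrite ?size_map //.
  by rewrite map_inj_in_uniq // => x x' /Ps Px /Ps; apply: inj.
move=> y; split=> [/onto [x /Ps sx <-]|/mapP [x /Ps Px ->]]; [exact: map_f | exact: PQ].
Qed.

Lemma has_card_rel (U : eqType) P (Q : U -> Prop) (R : T -> U -> Prop) k :
    (forall x, P x -> exists2 y, Q y & R x y) ->
    (forall y, Q y -> exists2 x, P x & R x y) ->
    (forall x x' y, P x -> P x' -> Q y -> R x y -> R x' y -> x = x') ->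
    (forall x y y', P x -> Q y -> Q y' -> R x y -> R x y' -> y = y') ->
  has_card P k -> has_card Q k.
Proof.
move=> tot onto inj Rfun HP; case: (classic (exists x, P x)) => [[x0 /tot [y0 _ _]]|P0].
  have [f Hf] : exists f : T -> U, forall x, P x -> Q (f x) /\ R x (f x).
    apply: (functional_choice (fun x y => P x -> Q y /\ R x y)) => x.
    by case: (classic (P x)) => [/tot [y Qy Rxy]|nPx]; [exists y | exists y0].
  apply: (has_card_map (f := f)) HP => [x /Hf [] // | y Qy | x x' Px Px' fxx'].
    have [x Px Rxy] := onto y Qy; have [Qfx Rxfx] := Hf x Px.
    by exists x => //; apply: Rfun Rxfx Rxy.
  have [Qfx Rxfx] := Hf x Px; have [_ Rx'fx'] := Hf x' Px'.
  by apply: (inj _ _ (f x)) => //; rewrite fxx'.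
have -> : k = 0 by case: HP => [[|x s] [_ <- Ps]] //; case: P0; exists x; apply/Ps/mem_head.
by exists [::]; split=> // y; split=> // /onto [x Px _]; case: P0; exists x.
Qed.

Lemma has_card_fibers (U : eqType) (f : T -> U) (F : T -> Prop) (V : U -> Prop) a t :
    has_card V t -> (forall v, V v -> has_card (fun x => F x /\ f x = v) a) ->
  has_card (fun x => F x /\ V (f x)) (a * t).
Proof.
move=> [s [Us <- Vs]] fib; apply: (eq_has_card (P := fun x => F x /\ f x \in s)).
  by move=> x; rewrite Vs.
have {Vs}fib v : v \in s -> has_card (fun x => F x /\ f x = v) a by move/Vs/fib.
elim: s Us fib => [_ _|v s IHs /andP [vs Us] fib] /=.
  by exists [::]; rewrite muln0; split=> // x; split=> [[]|].
have [l1 [Ul1 Sl1 Pl1]] := fib v (mem_head v s).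
have [l2 [Ul2 Sl2 Pl2]] : has_card (fun x => F x /\ f x \in s) (a * size s).
  by apply: IHs Us _ => w ws; apply: fib; rewrite in_cons ws orbT.
exists (l1 ++ l2); split.
- rewrite cat_uniq Ul1 Ul2 andbT /=; apply/hasPn => x /Pl2 [_ fxs].
  by apply/negP => /Pl1 [_ fxv]; move: vs; rewrite -fxv fxs.
- by rewrite size_cat Sl1 Sl2 mulnS.
move=> x; rewrite mem_cat in_cons; split.
  by move=> [Fx /orP [/eqP fxv|fxs]]; apply/orP; [left; apply/Pl1 | right; apply/Pl2].
by case/orP=> [/Pl1 [Fx ->]|/Pl2 [Fx ->]]; rewrite ?eqxx ?orbT.
Qed.

End Cardinality.

Lemma matrix_choice (R : Type) m n (P : 'I_m -> 'I_n -> R -> Prop) :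
  (forall i j, exists a, P i j a) -> exists A : 'M[R]_(m, n), forall i j, P i j (A i j).
Proof.
move=> HP; have [f Hf] := functional_choice (fun (ij : 'I_m * 'I_n) a => P ij.1 ij.2 a)
  (fun ij => HP ij.1 ij.2).
by exists (\matrix_(i, j) f (i, j))%R => i j; rewrite mxE; apply: (Hf (i, j)).
Qed.

Lemma has_card_rel_iff (T U : eqType) (P : T -> Prop) (Q : U -> Prop) (R : T -> U -> Prop) k :
    (forall x, P x -> exists2 y, Q y & R x y) ->
    (forall y, Q y -> exists2 x, P x & R x y) ->
    (forall x x' y, P x -> P x' -> Q y -> R x y -> R x' y -> x = x') ->
    (forall x y y', P x -> Q y -> Q y' -> R x y -> R x y' -> y = y') ->
  has_card P k <-> has_card Q k.
Proof.
move=> tot onto inj Rfun; split; first exact: (has_card_rel tot onto inj Rfun).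
apply: (has_card_rel (R := fun y x => R x y)) => [||y y' x Qy Qy' Px|y x x' Qy Px Px'].
- exact: onto.
- exact: tot.
- exact: Rfun x y y' Px Qy Qy'.
- exact: inj x x' y Px Px' Qy.
Qed.

Ltac n2_lia :=
  intros; unfold addN2, subN2, leN2, zero2, e1, e2, red, blue, red_path in *;
  repeat match goal with
  | H : @eq (nat * nat) _ _ |- _ =>
      let H1 := fresh in let H2 := fresh in
      have H1 := f_equal fst H; have H2 := f_equal snd H; clear H; rewrite /= in H1 H2
  end;
  repeat match goal with H : _ /\ _ |- _ => destruct H end;
  try (apply: injective_projections; rewrite /=);
  try split; simpl in *; lia.

(* ssrfun's [id] and [comp] shadow the fields of [twograph]. *)
Local Notation idv := (@Defs.id _).
Local Notation cmp := (@Defs.comp _).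

Section TwoGraphTheory.
Variable G : twograph.
Implicit Types (lam mu a b g : mor G) (v w : obj G).

Lemma deg0_id mu : deg mu = zero2 -> mu = idv (rg mu).
Proof.
move=> mu0; have : deg mu = addN2 zero2 zero2 by rewrite mu0.
case/unique_fact=> p [_ uniq_p].
have E1 : p = (idv (rg mu), mu) by apply: uniq_p; split; rewrite /= ?deg_id ?sr_id ?comp_id_l.
have E2 : p = (mu, idv (sr mu)) by apply: uniq_p; split; rewrite /= ?deg_id ?rg_id ?comp_id_r.
by rewrite E1 in E2; case: E2.
Qed.

Lemma comp_deg0l a b : deg a = zero2 -> sr a = rg b -> cmp a b = b.
Proof. by move=> /deg0_id a_id; rewrite a_id sr_id => ->; rewrite comp_id_l. Qed.

Lemma comp_deg0r a b : deg b = zero2 -> sr a = rg b -> cmp a b = a.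
Proof. by move=> /deg0_id b_id ab; rewrite b_id -ab comp_id_r. Qed.

Lemma factor_ex lam m n : deg lam = addN2 m n ->
  exists a b, [/\ deg a = m, deg b = n, sr a = rg b & cmp a b = lam].
Proof. by case/unique_fact=> [[a b] [[? ? ? ?] _]]; exists a, b. Qed.

Lemma comp_inj a b a' b' : sr a = rg b -> sr a' = rg b' ->
  deg a = deg a' -> deg b = deg b' -> cmp a b = cmp a' b' -> a = a' /\ b = b'.
Proof.
move=> ab a'b' da db E; have [p [_ uniq_p]] := unique_fact (deg_comp ab).
have E1 := uniq_p (a, b) (And4 erefl erefl ab erefl).
have E2 := uniq_p (a', b') (And4 (esym da) (esym db) a'b' (esym E)).
by rewrite E1 in E2; case: E2.
Qed.

Lemma comp_injl a b a' b' : sr a = rg b -> sr a' = rg b' ->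
  deg a = deg a' -> cmp a b = cmp a' b' -> a = a' /\ b = b'.
Proof.
move=> ab a'b' da E; apply: comp_inj => //.
by have := deg_comp ab; rewrite E deg_comp // da; n2_lia.
Qed.

Lemma comp_injr a b a' b' : sr a = rg b -> sr a' = rg b' ->
  deg b = deg b' -> cmp a b = cmp a' b' -> a = a' /\ b = b'.
Proof.
move=> ab a'b' db E; apply: comp_inj => //.
by have := deg_comp ab; rewrite E deg_comp // db; n2_lia.
Qed.

Lemma on_pathP lam v :
  on_path lam v <-> exists a b, [/\ sr a = v, rg b = v & lam = cmp a b].
Proof.
split=> [[k [_ [a [b [_ _ av vb E]]]]]|[a [b [av bv E]]]].
  rewrite rg_id in av; rewrite sr_id in vb.
  by exists a, b; split=> //; rewrite E vb comp_id_l.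
have dlam : deg lam = addN2 (deg a) (deg b) by rewrite E deg_comp // av bv.
exists (deg a); split; first by n2_lia.
exists a, b; split; rewrite ?rg_id ?sr_id ?deg_id ?av -?bv ?comp_id_l //; n2_lia.
Qed.

Lemma red_path_comp a b : sr a = rg b -> red_path (cmp a b) -> red_path a /\ red_path b.
Proof. by move=> /deg_comp; n2_lia. Qed.

Lemma red_path_transport (Phi : obj G -> Prop) :
    (forall g, red g -> Phi (rg g) -> Phi (sr g)) ->
  forall mu, red_path mu -> Phi (rg mu) -> Phi (sr mu).
Proof.
move=> step mu; move dmu: (deg mu).2 => k; elim: k mu dmu => [|k IHk] mu dmu red_mu.
  have mu_id : mu = idv (rg mu) by apply: deg0_id; n2_lia.
  by rewrite mu_id rg_id sr_id.
have [g [nu [dg dnu gnu <-]]] : exists g nu, [/\ deg g = e2, deg nu = (0, k), sr g = rg nu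
    & cmp g nu = mu] by apply: factor_ex; n2_lia.
rewrite rg_comp // sr_comp // => /(step _ dg); rewrite gnu; apply: IHk; n2_lia.
Qed.

Lemma cycle_transport (Phi : obj G -> Prop) lam v w :
    (forall g, red g -> Phi (rg g) -> Phi (sr g)) -> iso_red_cycle lam ->
  on_path lam v -> on_path lam w -> Phi v -> Phi w.
Proof.
move=> step [[_ lam_loop _] _ red_lam].
move=> /on_pathP [a [b [<- ab E]]] /on_pathP [a' [b' [<- a'b' E']]] Phi_a.
have [_ red_b] : red_path a /\ red_path b by apply: red_path_comp; rewrite -?E.
have [red_a' _] : red_path a' /\ red_path b' by apply: red_path_comp; rewrite -?E'.
apply: (red_path_transport step red_a').
rewrite -(rg_comp (esym a'b')) -E' lam_loop E (sr_comp (esym ab)).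
by apply: (red_path_transport step red_b); rewrite ab.
Qed.

Lemma red_path_vertices_finite lam : red_path lam -> finite_set (on_path lam).
Proof.
move=> red_lam; pose Q k v := exists a b, [/\ sr a = v, rg b = v, lam = cmp a b & (deg a).2 = k].
apply: (@finite_set_indexed _ _ Q (deg lam).2.+1).
  move=> v /on_pathP [a [b [av bv E]]]; exists (deg a).2; last by exists a, b.
  by have := deg_comp (etrans av (esym bv)); rewrite -E; n2_lia.
move=> k v v' [a [b [<- ab E da]]] [a' [b' [<- a'b' E' da']]].
have [red_a _] : red_path a /\ red_path b by apply: red_path_comp; rewrite -?E.
have [red_a' _] : red_path a' /\ red_path b' by apply: red_path_comp; rewrite -?E'.
have [-> //] : a = a' /\ b = b'.
by apply: comp_injl; rewrite -?E -?E' ?ab ?a'b' //; n2_lia.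
Qed.

Section IsolatedRedCycle.
Variable lam : mor G.
Hypothesis lam_cycle : iso_red_cycle lam.

Lemma iso_red_cycle_deg : (deg lam).1 = 0 /\ 0 < (deg lam).2.
Proof.
case: lam_cycle => [[lam_deg0 _ _] _]; rewrite /red_path.
by case: (deg lam) lam_deg0 => x [|y] /= nz x0 //; case: nz; rewrite x0.
Qed.

Let lam_loop : rg lam = sr lam.
Proof. by case: lam_cycle => [[]]. Qed.

Lemma cycle_cut_before w : on_path lam w -> exists a b,
  [/\ lam = cmp a b, sr a = w, rg b = w & leN2 (addN2 (deg a) e2) (deg lam)].
Proof.
have [lam_d1 lam_d2] := iso_red_cycle_deg.
move=> /on_pathP [a [b [aw bw E]]].
have dlam : deg lam = addN2 (deg a) (deg b) by rewrite E deg_comp // aw bw.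
have [lt|ge] := ltnP (deg a).2 (deg lam).2; first by exists a, b; split=> //; n2_lia.
(* [w] is the end [sr lam = rg lam] of the cycle: cut at its start instead. *)
have b_id : b = idv w by rewrite -bw; apply: deg0_id; n2_lia.
have w_rg : w = rg lam by rewrite lam_loop E sr_comp b_id ?sr_id ?rg_id.
exists (idv w), lam; rewrite w_rg comp_id_l sr_id deg_id; split=> //; n2_lia.
Qed.

Lemma cycle_cut_after w : on_path lam w -> exists a b,
  [/\ lam = cmp a b, sr a = w, rg b = w & leN2 (addN2 e2 (deg b)) (deg lam)].
Proof.
have [lam_d1 lam_d2] := iso_red_cycle_deg.
move=> /on_pathP [a [b [aw bw E]]].
have dlam : deg lam = addN2 (deg a) (deg b) by rewrite E deg_comp // aw bw.
have [a0|] := posnP (deg a).2; last by exists a, b; split=> //; n2_lia.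
(* [w] is the start [rg lam = sr lam] of the cycle: cut at its end instead. *)
have a_id : a = idv w by rewrite -aw (deg0_id (_ : deg a = zero2)) ?sr_id //; n2_lia.
have w_sr : w = sr lam by rewrite -lam_loop E rg_comp a_id ?rg_id ?sr_id.
exists lam, (idv w); rewrite w_sr comp_id_r rg_id deg_id; split=> //; n2_lia.
Qed.

Lemma cycle_red_in_prefix a b g : lam = cmp a b -> sr a = rg b ->
    leN2 (addN2 (deg a) e2) (deg lam) -> red g -> sr a = rg g ->
  exists2 y, b = cmp g y & sr g = rg y.
Proof.
move=> E ab le_lam g_red ag; have [_ iso _] := lam_cycle.
have dag : deg (cmp a g) = addN2 (deg a) e2 by rewrite deg_comp // g_red.
have rag : rg (cmp a g) = rg lam by rewrite E !rg_comp.
have [x [y [x0 _ xag agy E']]] := (iso _ le_lam).1 _ rag dag.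
have gy : sr g = rg y by rewrite -agy sr_comp.
have {}E' : lam = cmp (cmp a g) y by rewrite E' comp_deg0l // (rg_comp agy).
rewrite -(comp_assoc ag gy) E in E'.
have a_gy : sr a = rg (cmp g y) by rewrite rg_comp.
have [_ ->] := comp_injl ab a_gy erefl E'.
by exists y.
Qed.

Lemma cycle_red_out_suffix a b g : lam = cmp a b -> sr a = rg b ->
    leN2 (addN2 e2 (deg b)) (deg lam) -> red g -> sr g = rg b ->
  exists2 x, a = cmp x g & sr x = rg g.
Proof.
move=> E ab le_lam g_red gb; have [_ iso _] := lam_cycle.
have dgb : deg (cmp g b) = addN2 e2 (deg b) by rewrite deg_comp // g_red.
have sgb : sr (cmp g b) = sr lam by rewrite E !sr_comp.
have [x [y [dx _ xgb gby E']]] := (iso _ le_lam).2 _ sgb dgb.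
have dlam : deg lam = addN2 (deg x) (addN2 (deg (cmp g b)) (deg y)).
  by rewrite E' deg_comp ?deg_comp // rg_comp.
have xg : sr x = rg g by rewrite xgb rg_comp.
have y0 : deg y = zero2 by n2_lia.
have {}E' : lam = cmp x (cmp g b) by rewrite E' (comp_deg0r y0 gby).
rewrite (comp_assoc xg gb) E in E'.
have [-> _] := comp_injr ab (etrans (sr_comp xg) gb) erefl E'.
by exists x.
Qed.

Lemma cycle_red_in w : on_path lam w -> exists2 g, red g & rg g = w.
Proof.
move=> /cycle_cut_before [a [b [E aw bw le_lam]]].
have ab : sr a = rg b by rewrite aw bw.
have [g [y [g_red _ gy gyb]]] : exists g y, [/\ deg g = e2, deg y = subN2 (deg b) e2,
    sr g = rg y & cmp g y = b].
  by apply: factor_ex; have := deg_comp ab; rewrite -E; n2_lia.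
by exists g; rewrite // -bw -gyb rg_comp.
Qed.

Lemma cycle_red_in_unique w g g' : on_path lam w -> red g -> red g' ->
  rg g = w -> rg g' = w -> g = g'.
Proof.
move=> /cycle_cut_before [a [b [E aw bw le_lam]]] g_red g'_red gw g'w.
have ab : sr a = rg b by rewrite aw bw.
have [y b_gy gy] := cycle_red_in_prefix E ab le_lam g_red (etrans aw (esym gw)).
have [y' b_g'y' g'y'] := cycle_red_in_prefix E ab le_lam g'_red (etrans aw (esym g'w)).
by have [] := comp_injl gy g'y' (etrans g_red (esym g'_red)) (etrans (esym b_gy) b_g'y').
Qed.

Lemma cycle_red_in_closed w g : on_path lam w -> red g -> rg g = w -> on_path lam (sr g).
Proof.
move=> /cycle_cut_before [a [b [E aw bw le_lam]]] g_red gw.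
have ab : sr a = rg b by rewrite aw bw.
have ag : sr a = rg g by rewrite aw gw.
have [y b_gy gy] := cycle_red_in_prefix E ab le_lam g_red ag.
apply/on_pathP; exists (cmp a g), y; split; rewrite ?sr_comp //.
by rewrite E b_gy (comp_assoc ag gy).
Qed.

Lemma cycle_red_out w : on_path lam w -> exists2 g, red g & sr g = w.
Proof.
move=> /cycle_cut_after [a [b [E aw bw le_lam]]].
have ab : sr a = rg b by rewrite aw bw.
have [x [g [_ g_red xg xga]]] : exists x g, [/\ deg x = subN2 (deg a) e2, deg g = e2,
    sr x = rg g & cmp x g = a].
  by apply: factor_ex; have := deg_comp ab; rewrite -E; n2_lia.
by exists g; rewrite // -aw -xga sr_comp.
Qed.

Lemma cycle_red_out_unique w g g' : on_path lam w -> red g -> red g' ->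
  sr g = w -> sr g' = w -> g = g'.
Proof.
move=> /cycle_cut_after [a [b [E aw bw le_lam]]] g_red g'_red gw g'w.
have ab : sr a = rg b by rewrite aw bw.
have [x a_xg xg] := cycle_red_out_suffix E ab le_lam g_red (etrans gw (esym bw)).
have [x' a_x'g' x'g'] := cycle_red_out_suffix E ab le_lam g'_red (etrans g'w (esym bw)).
by have [] := comp_injr xg x'g' (etrans g_red (esym g'_red)) (etrans (esym a_xg) a_x'g').
Qed.

Lemma cycle_red_out_closed w g : on_path lam w -> red g -> sr g = w -> on_path lam (rg g).
Proof.
move=> /cycle_cut_after [a [b [E aw bw le_lam]]] g_red gw.
have ab : sr a = rg b by rewrite aw bw.
have gb : sr g = rg b by rewrite gw bw.
have [x a_xg xg] := cycle_red_out_suffix E ab le_lam g_red gb.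
apply/on_pathP; exists x, (cmp g b); split; rewrite ?rg_comp //.
by rewrite E a_xg (comp_assoc xg gb).
Qed.

End IsolatedRedCycle.

End TwoGraphTheory.

Section OppositeTwoGraph.
Variable G : twograph.

Lemma addN2C (m n : nat * nat) : addN2 m n = addN2 n m.
Proof. by rewrite /addN2 addnC [(m.2 + _)%N]addnC. Qed.

Lemma op_deg_comp (mu nu : mor G) : rg mu = sr nu -> deg (cmp nu mu) = addN2 (deg mu) (deg nu).
Proof. by move=> /esym/deg_comp ->; rewrite addN2C. Qed.

Lemma op_unique_fact (lam : mor G) m n : deg lam = addN2 m n ->
  exists! p : mor G * mor G, [/\ deg p.1 = m, deg p.2 = n, rg p.1 = sr p.2 & cmp p.2 p.1 = lam].
Proof.
rewrite addN2C => /unique_fact [[a b] [[da db ab E] uniq_ab]].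
exists (b, a); split; first by split.
move=> [b' a'] /= [db' da' a'b' E'].
by have [-> ->] : (a, b) = (a', b') by apply: uniq_ab.
Qed.

Definition op_twograph : twograph :=
  @TwoGraph (obj G) (mor G) (@Defs.id G) (@sr G) (@rg G) (fun mu nu => cmp nu mu) (@deg G)
    (@sr_id G) (@rg_id G)
    (fun mu nu e => sr_comp (esym e)) (fun mu nu e => rg_comp (esym e))
    (@comp_id_r G) (@comp_id_l G)
    (fun a b c ab bc => esym (comp_assoc (esym bc) (esym ab)))
    (@deg_id G) op_deg_comp op_unique_fact.

End OppositeTwoGraph.

Definition blue_between (G : twograph) (V W : obj G -> Prop) (e : mor G) : Prop :=
  blue e /\ V (rg e) /\ W (sr e).

Definition red_closed (G : twograph) (S : obj G -> Prop) : Prop :=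
  forall g : mor G, red g -> S (rg g) <-> S (sr g).

Section RedRangeShift.
Variable G : twograph.
Hypothesis red_in : forall w : obj G, exists2 g : mor G, red g & rg g = w.
Hypothesis red_in_unique : forall g g' : mor G, red g -> red g' -> rg g = rg g' -> g = g'.

Lemma has_card_blue_rg_shift (W : obj G -> Prop) (f : mor G) k :
    red_closed W -> red f ->
  has_card (blue_between (eq^~ (sr f)) W) k <-> has_card (blue_between (eq^~ (rg f)) W) k.
Proof.
move=> W_closed f_red.
apply: (has_card_rel_iff
  (R := fun e e' => exists g, [/\ red g, sr e' = rg g & cmp f e = cmp e' g])).
- move=> e [e_blue [ef We]].
  have [e' [g [e'_blue g_red e'g E]]] : exists e' g, [/\ deg e' = e1, deg g = e2,
      sr e' = rg g & cmp e' g = cmp f e] by apply: factor_ex; rewrite deg_comp ?f_red ?e_blue.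
  exists e'; last by exists g.
  split; [done | split; first by rewrite -(rg_comp e'g) E rg_comp].
  by rewrite e'g W_closed // -(sr_comp e'g) E sr_comp.
- move=> e' [e'_blue [e'f We']]; have [g g_red ge'] := red_in (sr e').
  have [f' [e [f'_red e_blue f'e E]]] : exists f' e, [/\ deg f' = e2, deg e = e1,
      sr f' = rg e & cmp f' e = cmp e' g] by apply: factor_ex; rewrite deg_comp ?g_red ?e'_blue.
  have f'f : f' = f.
    by apply: red_in_unique => //; rewrite -(rg_comp f'e) E rg_comp.
  subst f'; exists e; last by exists g.
  split; [done | split; first by []].
  by rewrite -(sr_comp f'e) E sr_comp // -W_closed // ge'.
- move=> x x' y [_ [xf _]] [_ [x'f _]] _ [g [g_red yg E]] [g' [g'_red yg' E']].
  have gg' : g = g' by apply: red_in_unique; rewrite -?yg -?yg'.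
  subst g'; rewrite -E' in E.
  by have [] := comp_injl (esym xf) (esym x'f) erefl E.
- move=> x y y' _ [y_blue _] [y'_blue _] [g [g_red yg E]] [g' [g'_red y'g' E']].
  rewrite E in E'.
  by have [] := comp_injl yg y'g' (etrans y_blue (esym y'_blue)) E'.
Qed.

End RedRangeShift.

Section RedSourceShift.
Variable G : twograph.
Hypothesis red_out : forall w : obj G, exists2 g : mor G, red g & sr g = w.
Hypothesis red_out_unique : forall g g' : mor G, red g -> red g' -> sr g = sr g' -> g = g'.

Lemma has_card_blue_sr_shift (V : obj G -> Prop) (f : mor G) k :
    red_closed V -> red f ->
  has_card (blue_between V (eq^~ (rg f))) k <-> has_card (blue_between V (eq^~ (sr f))) k.
Proof.
move=> V_closed f_red.
have op_closed : @red_closed (op_twograph G) V by move=> g /V_closed; apply: iff_sym.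
have swap x e : @blue_between (op_twograph G) (eq^~ x) V e <-> blue_between V (eq^~ x) e.
  by rewrite /blue_between /=; tauto.
have := has_card_blue_rg_shift (G := op_twograph G) red_out red_out_unique k op_closed f_red.
by case=> op_sr_rg op_rg_sr; split=> /(eq_has_card (fun e => iff_sym (swap _ e)))
  => [/op_sr_rg|/op_rg_sr] /(eq_has_card (swap _)).
Qed.

End RedSourceShift.

Section BlueEdgeCounts.
Variable G : twograph.
Implicit Types V W : obj G -> Prop.

Lemma has_card_blue_between_rg V W a t : has_card V t ->
    (forall v, V v -> has_card (blue_between (eq^~ v) W) a) ->
  has_card (blue_between V W) (a * t).
Proof.
move=> V_card fib.
have := has_card_fibers (f := @rg G) (F := fun e => blue e /\ W (sr e)) (a := a) V_card.
move=> card; apply: eq_has_card (card _) => [e|v /fib]; first by rewrite /blue_between; tauto.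
by apply: eq_has_card => e; rewrite /blue_between; tauto.
Qed.

Lemma has_card_blue_between_sr V W b t : has_card W t ->
    (forall w, W w -> has_card (blue_between V (eq^~ w)) b) ->
  has_card (blue_between V W) (b * t).
Proof.
move=> W_card fib.
have := has_card_fibers (f := @sr G) (F := fun e => blue e /\ V (rg e)) (a := b) W_card.
move=> card; apply: eq_has_card (card _) => [e|w /fib]; first by rewrite /blue_between; tauto.
by apply: eq_has_card => e; rewrite /blue_between; tauto.
Qed.

End BlueEdgeCounts.

Lemma lt_depth_in_depth N n : lt_depth N n -> in_depth N n /\ in_depth N n.+1.
Proof. by case: N => //= N0 n_lt; rewrite n_lt ltnW. Qed.

Section Bratteli.
Variables (G : twograph) (N : option nat) (level : obj G -> nat) (c : nat -> nat).
Variable Vs : forall n, 'I_(c n) -> obj G -> Prop.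
Arguments Vs : clear implicits.
Hypothesis brat : bratteli N level.
Hypothesis enum : forall n, in_depth N n -> cycle_enum level n (Vs n).

Let on_cycle (v : obj G) : exists lam, iso_red_cycle lam /\ on_path lam v.
Proof. by case: brat => _ [_ [_ [_ [_ [_ []]]]]]. Qed.

Lemma bratteli_red_in w : exists2 g : mor G, red g & rg g = w.
Proof. by have [lam [lam_cycle w_on]] := on_cycle w; apply: cycle_red_in w_on. Qed.

Lemma bratteli_red_in_unique (g g' : mor G) : red g -> red g' -> rg g = rg g' -> g = g'.
Proof.
move=> g_red g'_red gg'; have [lam [lam_cycle w_on]] := on_cycle (rg g).
exact: cycle_red_in_unique w_on g_red g'_red erefl (esym gg').
Qed.

Lemma bratteli_red_out w : exists2 g : mor G, red g & sr g = w.
Proof. by have [lam [lam_cycle w_on]] := on_cycle w; apply: cycle_red_out w_on. Qed.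

Lemma bratteli_red_out_unique (g g' : mor G) : red g -> red g' -> sr g = sr g' -> g = g'.
Proof.
move=> g_red g'_red gg'; have [lam [lam_cycle w_on]] := on_cycle (sr g).
exact: cycle_red_out_unique w_on g_red g'_red erefl (esym gg').
Qed.

Section Level.
Variable m : nat.
Hypothesis m_depth : in_depth N m.

Let Vs_cycle j : exists lam, [/\ iso_red_cycle lam, forall v, Vs m j v <-> on_path lam v
  & exists v, on_path lam v /\ level v = m].
Proof. by case: (enum m_depth) => + _ _; apply. Qed.

Lemma Vs_red_closed j : red_closed (Vs m j).
Proof.
have [lam [lam_cycle Vs_lam _]] := Vs_cycle j; move=> g g_red; rewrite !Vs_lam.
by split=> [/cycle_red_in_closed|/cycle_red_out_closed]; apply.
Qed.

Lemma Vs_level j v : Vs m j v -> level v = m.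
Proof.
have [lam [lam_cycle Vs_lam [v0 [v0_on v0_level]]]] := Vs_cycle j.
move=> /Vs_lam v_on.
apply: (cycle_transport (Phi := fun v => level v = m) _ lam_cycle v0_on v_on v0_level).
by case: brat => _ [_ [_ [_ [_ [_ [_ level_red]]]]]] g /level_red ->.
Qed.

Lemma Vs_cover v : level v = m -> exists j, Vs m j v.
Proof.
have [lam [lam_cycle v_on]] := on_cycle v; case: (enum m_depth) => _ cover _ vm.
by have [j Vs_lam] := cover lam lam_cycle (ex_intro _ v (conj v_on vm)); exists j; apply/Vs_lam.
Qed.

Lemma Vs_nonempty j : exists v, Vs m j v.
Proof. by have [lam [_ Vs_lam [v [v_on _]]]] := Vs_cycle j; exists v; apply/Vs_lam. Qed.

Lemma Vs_card : exists t : 'I_(c m) -> nat, forall j, has_card (Vs m j) (t j).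
Proof.
apply: (functional_choice (fun j t => has_card (Vs m j) t)) => j.
have [lam [[_ _ red_lam] Vs_lam _]] := Vs_cycle j.
have [t lam_card] := red_path_vertices_finite red_lam.
by exists t; apply: eq_has_card lam_card => v; rewrite Vs_lam.
Qed.

Lemma Vs_uniform_card (X : obj G -> mor G -> Prop) j :
    (forall g k, red g -> has_card (X (rg g)) k -> has_card (X (sr g)) k) ->
    (forall v, Vs m j v -> finite_set (X v)) ->
  exists a, forall v, Vs m j v -> has_card (X v) a.
Proof.
move=> X_red X_fin; have [lam [lam_cycle Vs_lam _]] := Vs_cycle j.
have [v0 Vs_v0] := Vs_nonempty j; have [a X_v0] := X_fin v0 Vs_v0.
exists a => v /Vs_lam v_on; move/Vs_lam: Vs_v0 => v0_on.
apply: (cycle_transport (Phi := fun v => has_card (X v) a) _ lam_cycle v0_on v_on X_v0).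
by move=> g; apply: X_red.
Qed.

End Level.

Section ConsecutiveLevels.
Variable n : nat.
Hypothesis n_depth : lt_depth N n.

Let n_in_depth : in_depth N n := (lt_depth_in_depth n_depth).1.
Let n1_in_depth : in_depth N n.+1 := (lt_depth_in_depth n_depth).2.

Lemma blue_rg_count_matrix : exists A : 'M[nat]_(c n.+1, c n),
  forall i j v, Vs n j v -> has_card (blue_between (eq^~ v) (Vs n.+1 i)) (A i j).
Proof.
apply: (matrix_choice (P := fun i j a => forall v, Vs n j v ->
  has_card (blue_between (eq^~ v) (Vs n.+1 i)) a)) => i j.
apply: Vs_uniform_card => // [g k g_red|v _].
  exact: (has_card_blue_rg_shift bratteli_red_in bratteli_red_in_unique k
    (Vs_red_closed n1_in_depth i) g_red).2.
have [rowfin _] := brat.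
by apply: finite_set_subset (rowfin v e1) => e [e_blue [ev _]].
Qed.

Lemma blue_sr_count_matrix : exists B : 'M[nat]_(c n.+1, c n),
  forall i j w, Vs n.+1 i w -> has_card (blue_between (Vs n j) (eq^~ w)) (B i j).
Proof.
apply: (matrix_choice (P := fun i j b => forall w, Vs n.+1 i w ->
  has_card (blue_between (Vs n j) (eq^~ w)) b)) => i j.
apply: Vs_uniform_card => // [g k g_red|w w_in].
  exact: (has_card_blue_sr_shift bratteli_red_out bratteli_red_out_unique k
    (Vs_red_closed n_in_depth j) g_red).1.
have [A HA] := blue_rg_count_matrix; have [t Ht] := Vs_card n_in_depth.
apply: finite_set_subset (ex_intro _ _ (has_card_blue_between_rg (Ht j) (HA i j))).
by move=> e [e_blue [ev ew]]; rewrite /blue_between ew.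
Qed.

Lemma exists_blue_edge_sr i : exists j (e : mor G), blue_between (Vs n j) (Vs n.+1 i) e.
Proof.
have [w w_in] := Vs_nonempty n1_in_depth i; have w_level := Vs_level n1_in_depth w_in.
case: brat => _ [_ [_ [level_blue [level0 _]]]].
have [e [e_blue ew]] : exists e, blue e /\ sr e = w.
  apply: NNPP => no_e; have := level0 w (fun e eb ew => no_e (ex_intro _ e (conj eb ew))).
  by rewrite w_level.
have [j Vs_e] : exists j, Vs n j (rg e).
  by apply: Vs_cover n_in_depth _ _; have := level_blue e e_blue; rewrite ew w_level => -[].
by exists j, e; rewrite /blue_between ew.
Qed.

Lemma exists_blue_edge_rg j : exists i (e : mor G), blue_between (Vs n j) (Vs n.+1 i) e.
Proof.
have [v v_in] := Vs_nonempty n_in_depth j; have v_level := Vs_level n_in_depth v_in.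
case: brat => _ [_ [_ [level_blue [_ [levelN _]]]]].
have [e [e_blue ev]] : exists e, blue e /\ rg e = v.
  apply: NNPP => no_e; have := levelN v (fun e eb ev => no_e (ex_intro _ e (conj eb ev))).
  by rewrite v_level => N_n; move: n_depth; rewrite N_n /= ltnn.
have [i Vs_e] : exists i, Vs n.+1 i (sr e).
  by apply: Vs_cover n1_in_depth _ _; rewrite level_blue // ev v_level.
by exists i, e; rewrite /blue_between ev.
Qed.

End ConsecutiveLevels.
End Bratteli.

Theorem lemma4p2 (G : twograph) (N : option nat) (level : obj G -> nat)
    (c : nat -> nat) (Vs : forall n, 'I_(c n) -> obj G -> Prop) :
  bratteli N level ->
  (forall n, in_depth N n -> cycle_enum level n (Vs n)) ->
  forall n, lt_depth N n ->
  exists (A B : 'M[nat]_(c n.+1, c n)) (t : 'I_(c n) -> nat) (t' : 'I_(c n.+1) -> nat),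
    (* T_n(j,j) = |V_{n,j}|, T_{n+1}(i,i) = |V_{n+1,i}| *)
        (forall j, has_card (Vs n j) (t j)) /\
        (forall i, has_card (Vs n.+1 i) (t' i)) /\
        (* (1) *)
        (forall i j v, Vs n j v ->
           has_card (fun e => blue e /\ rg e = v /\ Vs n.+1 i (sr e)) (A i j)) /\
        (* (2) *)
        (forall i j w, Vs n.+1 i w ->
           has_card (fun e => blue e /\ Vs n j (rg e) /\ sr e = w) (B i j)) /\
        (* (3) *)
        (forall i j, exists k,
           [/\ has_card (fun e => blue e /\ Vs n j (rg e) /\ Vs n.+1 i (sr e)) k,
               (A i j * t j)%N = k & k = (t' i * B i j)%N]) /\
        (* no zero rows or columns *)
        [/\ (forall i, exists j, A i j <> 0%N), (forall j, exists i, A i j <> 0%N),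
            (forall i, exists j, B i j <> 0%N) & (forall j, exists i, B i j <> 0%N)] /\
        (* A_n T_n = T_{n+1} B_n *)
        (A *m diag_mx (\row_j t j) = diag_mx (\row_i t' i) *m B)%R.
Proof.
move=> brat enum n n_depth; have [n_in n1_in] := lt_depth_in_depth n_depth.
have [t Ht] := Vs_card enum n_in; have [t' Ht'] := Vs_card enum n1_in.
have [A HA] := blue_rg_count_matrix brat enum n_depth.
have [B HB] := blue_sr_count_matrix brat enum n_depth.
have card_rg i j := has_card_blue_between_rg (Ht j) (HA i j).
have card_sr i j := has_card_blue_between_sr (Ht' i) (HB i j).
have AT_TB i j : A i j * t j = t' i * B i j.
  by rewrite [RHS]mulnC; apply: has_card_unique (card_rg i j) (card_sr i j).
have A_neq0 i j e : blue_between (Vs n j) (Vs n.+1 i) e -> A i j <> 0.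
  by case=> e_blue [ev ew]; apply: has_card_neq0 (HA i j _ ev) (conj e_blue (conj erefl ew)).
have B_neq0 i j e : blue_between (Vs n j) (Vs n.+1 i) e -> B i j <> 0.
  by case=> e_blue [ev ew]; apply: has_card_neq0 (HB i j _ ew) (conj e_blue (conj ev erefl)).
exists A, B, t, t'; split; first exact: Ht.
split; first exact: Ht'.
split; first exact: HA.
split; first exact: HB.
split; first by move=> i j; exists (A i j * t j); split=> //; apply: card_rg.
split; last by apply/matrixP => i j; rewrite mul_mx_diag mul_diag_mx !mxE; apply: AT_TB.
split=> [i|j|i|j].
- by have [j [e /A_neq0]] := exists_blue_edge_sr brat enum n_depth i; exists j.
- by have [i [e /A_neq0]] := exists_blue_edge_rg brat enum n_depth j; exists i.
- by have [j [e /B_neq0]] := exists_blue_edge_sr brat enum n_depth i; exists j.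
- by have [i [e /B_neq0]] := exists_blue_edge_rg brat enum n_depth j; exists i.
Qed.
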